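(* Let $t>204$ be an integer and $P(x,y)=x^{4}+4tx^{3}y-6tx^{2}y^{2}-4t^{2}xy^{3}+t^{2}y^{4}$. Fix complex numbers $\alpha,\beta$ with $\alpha^4=1+i\sqrt t$ and $\beta^4=-1+i\sqrt t$, and for integers $x,y$ put $\xi(x,y)=\sqrt2\,\alpha\,(x-i\sqrt t\,y)$, $\eta(x,y)=\sqrt2\,\beta\,(x+i\sqrt t\,y)$ and $z(x,y)=1-\left(\eta(x,y)/\xi(x,y)\right)^4$. Suppose $(x,y)$ is a pair of positive integers with $0<P(x,y)\le t^2$ and $xy>64t^3$, and let $\omega_j\in\{1,i,-1,-i\}$ satisfy $$\left|\omega_j-\frac{\eta(x,y)}{\xi(x,y)}\right|=\min_{0\le k\le 3}\left|e^{k\pi i/2}-\frac{\eta(x,y)}{\xi(x,y)}\right|.$$ Then $\left|\omega_j-\frac{\eta(x,y)}{\xi(x,y)}\right|<\frac{\pi}{12}\,|z(x,y)|$.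
   Context: Note $\xi^4=4(\sqrt{-t}+1)(x-\sqrt{-t}y)^4$, $\eta^4=4(\sqrt{-t}-1)(x+\sqrt{-t}y)^4$ and $P=\frac18(\xi^4-\eta^4)$, with $\sqrt{-t}=i\sqrt t$. *)

From HB Require Import structures.
From mathcomp Require Import all_boot all_order all_algebra.
From mathcomp Require Import complex.
From mathcomp Require Import reals trigo.
Set Implicit Arguments. Unset Strict Implicit. Unset Printing Implicit Defensive.
Import Order.TTheory GRing.Theory Num.Theory.
Local Open Scope ring_scope.
Local Open Scope complex_scope.

Definition Pform (t x y : int) : int :=
  x ^+ 4 + 4 * t * x ^+ 3 * y - 6 * t * x ^+ 2 * y ^+ 2
  - 4 * t ^+ 2 * x * y ^+ 3 + t ^+ 2 * y ^+ 4.

Section Cx.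
Variable R : realType.

Definition sqrtt (t : int) : R[i] := (Num.sqrt (t%:~R : R))%:C.
Definition sqrt2C : R[i] := (Num.sqrt (2 : R))%:C.

Definition xiC (t : int) (alpha : R[i]) (x y : int) : R[i] :=
  sqrt2C * alpha * ((x%:~R : R)%:C - 'i * sqrtt t * (y%:~R : R)%:C).
Definition etaC (t : int) (beta : R[i]) (x y : int) : R[i] :=
  sqrt2C * beta * ((x%:~R : R)%:C + 'i * sqrtt t * (y%:~R : R)%:C).
Definition zC (t : int) (alpha beta : R[i]) (x y : int) : R[i] :=
  1 - (etaC t beta x y / xiC t alpha x y) ^+ 4.
End Cx.

(* Put w := eta / xi.  Since |1 + i sqrt t| = |-1 + i sqrt t| and
   |x - i sqrt t y| = |x + i sqrt t y|, the point w lies on the unit circle, and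
   since xi^4 - eta^4 = 8 P(x, y) we get z = 1 - w^4 = 8 P / xi^4 with
   |xi^4| >= 4 (x^2 + t y^2)^2 >= 16 t (x y)^2, so xy > 64 t^3 and P <= t^2 make
   0 < |z| <= 1/10.  Write w = a + i b; by symmetry the nearest fourth root of
   unity is 1, so a >= |b|, |1 - w|^2 = 2 (1 - a) and
   |z|^2 = 16 a^2 b^2 = 16 a^2 (1 - a) (1 + a); the claim becomes
   pi^2 a^2 (1 + a) > 18, true since |z| small forces a > 0.999 and pi > 3.02. *)

From HB Require Import structures.
From mathcomp Require Import all_boot all_order all_algebra.
From mathcomp Require Import complex.
From mathcomp Require Import all_classical all_reals all_analysis.
From mathcomp Require Import ring lra.
Set Implicit Arguments. Unset Strict Implicit. Unset Printing Implicit Defensive.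
Import Order.TTheory GRing.Theory Num.Theory numFieldNormedType.Exports.
Local Open Scope ring_scope.

Lemma cos_coeff'_pair_gt0 (R : realType) (x : R) (n : nat) :
  ~~ odd n -> 0 < x -> x ^+ 2 < (n.*2.+1 * n.*2.+2)%:R ->
  0 < cos_coeff' x n + cos_coeff' x n.+1.
Proof.
move=> n_even x_gt0 x2_lt.
have F_gt0 : 0 < n.*2`!%:R :> R by rewrite ltr0n fact_gt0.
have ab_gt0 : 0 < (n.*2.+1 * n.*2.+2)%:R :> R by rewrite ltr0n.
have sign_n : (-1) ^+ n = 1 :> R by rewrite -signr_odd (negbTE n_even).
rewrite /cos_coeff' -!exprnP exprS sign_n mulr1 mul1r mulN1r.
rewrite doubleS !factS !exprS.
have -> : x ^+ n.*2 / n.*2`!%:R + - (x * (x * x ^+ n.*2)) / (n.*2.+2 * (n.*2.+1 * n.*2`!))%:R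
    = x ^+ n.*2 / n.*2`!%:R * (1 - x ^+ 2 / (n.*2.+1 * n.*2.+2)%:R).
  rewrite !natrM; field.
  have n2_ge0 : 0 <= n.*2%:R :> R by [].
  by rewrite (gt_eqF F_gt0) andbT; apply/andP; split; apply/lt0r_neq0; lra.
apply: mulr_gt0; first by rewrite divr_gt0 // exprn_gt0.
by rewrite subr_gt0 ltr_pdivrMr // mul1r.
Qed.

Lemma cos_151_gt0 (R : realType) : 0 < cos (151 / 100 : R).
Proof.
set c : R := 151 / 100.
have cvg_cos := @cvg_cos_coeff' R c.
rewrite -(cvg_lim (@Rhausdorff R) cvg_cos).
apply: (@lt_trans _ _ (\sum_(0 <= i < 4) cos_coeff' c i)).
  rewrite !big_nat_recr //= big_nil add0r /cos_coeff' -!exprnP /= !factS fact0.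
  rewrite /c; lra.
apply: lt_sum_lim_series; first by move/cvgP in cvg_cos.
move=> d; apply: cos_coeff'_pair_gt0; first by rewrite oddD odd_double.
  by rewrite /c; lra.
apply: (@lt_le_trans _ _ 90); first by rewrite /c; lra.
by rewrite ler_nat (@leq_mul 9 10) // ltnS leq_double leq_addr.
Qed.

Lemma pi_gt_302 (R : realType) : 302 / 100 < (pi : R).
Proof.
have pi_ge2 := @pi_ge2 R.
have c_in : (151 / 100 : R) \in `[0, pi] by rewrite in_itv /=; apply/andP; split; lra.
have pihalf_in : (pi / 2 : R) \in `[0, pi] by rewrite in_itv /=; apply/andP; split; lra.
have := ltr_cos c_in pihalf_in; rewrite cos_pihalf cos_151_gt0 => /esym; lra.
Qed.

Lemma chord_sqr_lt (R : realType) (p q r : R) :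
  p ^+ 2 + q ^+ 2 = 1 -> q ^+ 2 <= p ^+ 2 -> 0 <= p -> p ^+ 2 * q ^+ 2 = r ->
  0 < r -> 16 * r <= 1 / 100 ->
  2 * (1 - p) < (pi / 12) ^+ 2 * (16 * r).
Proof.
move=> unit q2_le p_ge0 <- pq_gt0 pq_small.
have p_ge : 999 / 1000 <= p by nra.
have p_lt1 : p < 1 by nra.
have pi_gt := @pi_gt_302 R.
have pi2_ge : 912 / 100 <= (pi : R) ^+ 2 by nra.
have : 18 < pi ^+ 2 * (p ^+ 2 * (1 + p)).
  suff : 912 / 100 * (998 / 1000 * (1999 / 1000)) <= (pi : R) ^+ 2 * (p ^+ 2 * (1 + p)).
    lra.
  by apply: ler_pM; [lra|lra|lra|]; apply: ler_pM; nra.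
have -> : (pi / 12) ^+ 2 * (16 * (p ^+ 2 * q ^+ 2)) =
          (1 - p) * (pi ^+ 2 * (p ^+ 2 * (1 + p)) / 9).
  by rewrite (_ : q ^+ 2 = (1 - p) * (1 + p)); [field | nra].
nra.
Qed.

Local Open Scope complex_scope.

Section UnitCircle.
Variable R : realType.
Local Notation Re := (@complex.Re R).
Local Notation Im := (@complex.Im R).

Lemma sqr_normc_sub (c w : R[i]) :
  `|c - w| ^+ 2 = ((Re c - Re w) ^+ 2 + (Im c - Im w) ^+ 2)%:C.
Proof. by case: c w => [c1 c2] [w1 w2]; rewrite -add_Re2_Im2. Qed.

Lemma sqr_normc_1_sub_pow4 (a b : R) : a ^+ 2 + b ^+ 2 = 1 ->
  `|1 - (a +i* b) ^+ 4| ^+ 2 = (16 * (a ^+ 2 * b ^+ 2))%:C.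
Proof.
move=> unit; rewrite -add_Re2_Im2; congr (_%:C).
transitivity ((1 - (a ^+ 2 + b ^+ 2) ^+ 2) ^+ 2 + 16 * (a ^+ 2 * b ^+ 2)).
  by rewrite !exprS expr0 /=; ring.
by rewrite unit expr1n subrr expr0n add0r.
Qed.

Lemma nearest_root4_dist_lt (w omega : R[i]) :
  `|w| = 1 -> omega \in [:: 1; 'i; -1; - 'i] ->
  (forall k : 'I_4, `|omega - w| <= `|'i ^+ k - w|) ->
  0 < `|1 - w ^+ 4| -> `|1 - w ^+ 4| <= (1 / 10)%:C ->
  `|omega - w| < (pi / 12 : R)%:C * `|1 - w ^+ 4|.
Proof.
have sqr_le (u v : R[i]) : 0 <= u -> 0 <= v -> (u <= v) = (u ^+ 2 <= v ^+ 2).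
  by move=> u0 v0; rewrite ler_pXn2r.
have sqr_lt (u v : R[i]) : 0 <= u -> 0 <= v -> (u < v) = (u ^+ 2 < v ^+ 2).
  by move=> u0 v0; rewrite ltr_pXn2r.
case: w => a b; set w := a +i* b.
move=> /(congr1 (fun u => u ^+ 2)); rewrite expr1n -add_Re2_Im2 => -[/= unit].
have z2 := sqr_normc_1_sub_pow4 unit; rewrite -/w in z2.
move=> omega_root nearest z_gt0 z_small.
have {z_gt0} ab_gt0 : 0 < a ^+ 2 * b ^+ 2.
  by move: z_gt0; rewrite sqr_lt // expr0n z2 ltcR; lra.
have {z_small} ab_small : 16 * (a ^+ 2 * b ^+ 2) <= 1 / 100.
  by move: z_small; rewrite sqr_le ?normr_ge0 ?ler0c // z2 -rmorphXn lecR; lra.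
have near (c : R[i]) (k : 'I_4) : c = 'i ^+ k ->
    (Re omega - a) ^+ 2 + (Im omega - b) ^+ 2 <= (Re c - a) ^+ 2 + (Im c - b) ^+ 2.
  by move=> ->; move: (nearest k); rewrite sqr_le ?normr_ge0 // !sqr_normc_sub lecR.
have := near 1 (@Ordinal 4 0 isT) (expr0 'i).
have := near 'i (@Ordinal 4 1 isT) (expr1 'i).
have := near (-1) (@Ordinal 4 2 isT) ltac:(by rewrite !exprS expr0; simpc).
have := near (- 'i) (@Ordinal 4 3 isT) ltac:(by rewrite !exprS expr0; simpc).
have pi12_ge0 : 0 <= pi / 12 :> R by rewrite divr_ge0 ?pi_ge0.
rewrite sqr_lt ?normr_ge0 //; last by rewrite mulr_ge0 // lecR.
rewrite (exprMn_comm _ (mulrC _ _)) z2 sqr_normc_sub /=.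
rewrite (_ : _ * _ = ((pi / 12) ^+ 2 * (16 * (a ^+ 2 * b ^+ 2)))%:C); last first.
  by rewrite [RHS]rmorphM rmorphXn.
rewrite ltcR; move: omega_root; rewrite !inE => /or4P[]/eqP-> /= n3 n2 n1 n0.
- have := @chord_sqr_lt R a b _ unit ltac:(nra) ltac:(nra) erefl ab_gt0 ab_small.
  nra.
- have := @chord_sqr_lt R b a _ ltac:(lra) ltac:(nra) ltac:(nra) (mulrC _ _) ab_gt0 ab_small.
  nra.
- have := @chord_sqr_lt R (- a) b _ ltac:(rewrite sqrrN; lra) ltac:(rewrite sqrrN; nra)
    ltac:(nra) ltac:(by rewrite sqrrN) ab_gt0 ab_small.
  nra.
- have := @chord_sqr_lt R (- b) a _ ltac:(rewrite sqrrN; lra) ltac:(rewrite sqrrN; nra)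
    ltac:(nra) ltac:(by rewrite sqrrN mulrC) ab_gt0 ab_small.
  nra.
Qed.

End UnitCircle.

Section QuarticIdentities.
Variable R : rcfType.

Lemma quartic_identity (s X Y : R) :
  4 * (1 + 'i * s%:C) * (X%:C - 'i * s%:C * Y%:C) ^+ 4
    - 4 * (-1 + 'i * s%:C) * (X%:C + 'i * s%:C * Y%:C) ^+ 4
  = (8 * (X ^+ 4 + 4 * s ^+ 2 * X ^+ 3 * Y - 6 * s ^+ 2 * X ^+ 2 * Y ^+ 2
          - 4 * s ^+ 4 * X * Y ^+ 3 + s ^+ 4 * Y ^+ 4))%:C.
Proof.
rewrite !exprS expr0; apply/eqP; rewrite eq_complex /=.
by apply/andP; split; apply/eqP; ring.
Qed.

Lemma sqr_normc_sub_i (s X Y : R) :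
  `|X%:C - 'i * s%:C * Y%:C| ^+ 2 = (X ^+ 2 + s ^+ 2 * Y ^+ 2)%:C.
Proof. by rewrite -add_Re2_Im2 /=; congr (_%:C); ring. Qed.

Lemma sqr_normc_add_i (s X Y : R) :
  `|X%:C + 'i * s%:C * Y%:C| ^+ 2 = (X ^+ 2 + s ^+ 2 * Y ^+ 2)%:C.
Proof. by rewrite -add_Re2_Im2 /=; congr (_%:C); ring. Qed.

Lemma normc_1_add_i (s : R) : `|1 + 'i * s%:C| = (Num.sqrt (1 + s ^+ 2))%:C.
Proof. by rewrite normc_def /=; congr (Num.sqrt _)%:C; ring. Qed.

Lemma normc_N1_add_i (s : R) : `|-1 + 'i * s%:C| = (Num.sqrt (1 + s ^+ 2))%:C.
Proof. by rewrite normc_def /=; congr (Num.sqrt _)%:C; ring. Qed.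

End QuarticIdentities.

Lemma quartic_form_bound (R : realDomainType) (T X Y : R) :
  1 <= T -> 64 * T ^+ 3 < X * Y -> 20 * T ^+ 2 <= (X ^+ 2 + T * Y ^+ 2) ^+ 2.
Proof.
move=> T_ge1 XY_gt.
have amgm : 4 * T * (X * Y) ^+ 2 <= (X ^+ 2 + T * Y ^+ 2) ^+ 2.
  by rewrite -subr_ge0 (_ : _ - _ = (X ^+ 2 - T * Y ^+ 2) ^+ 2) ?sqr_ge0 //; ring.
have T3_ge : T <= 64 * T ^+ 3 by nra.
have : T ^+ 2 <= (X * Y) ^+ 2 by nra.
nra.
Qed.

Lemma sqrt2C_pow4 (R : realType) : sqrt2C R ^+ 4 = 4.
Proof.
rewrite /sqrt2C -rmorphXn (exprM _ 2 2) sqr_sqrtr ?ler0n //.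
by rewrite -natrX rmorph_nat.
Qed.

Section XiEta.
Variables (R : realType) (t : int) (alpha beta : R[i]) (x y : int).
Hypotheses (t_ge0 : 0 <= t)
  (alpha4 : alpha ^+ 4 = 1 + 'i * sqrtt R t)
  (beta4 : beta ^+ 4 = -1 + 'i * sqrtt R t).

Local Notation T := (t%:~R : R).
Local Notation X := (x%:~R : R).
Local Notation Y := (y%:~R : R).
Local Notation s := (Num.sqrt T).
Local Notation P := ((Pform t x y)%:~R : R).
Local Notation xi := (xiC t alpha x y).
Local Notation eta := (etaC t beta x y).

Let sqr_s : s ^+ 2 = T.
Proof. by rewrite sqr_sqrtr // ler0z. Qed.

Let s_pow4 : s ^+ 4 = T ^+ 2.
Proof. by rewrite (exprM _ 2 2) sqr_s. Qed.

Lemma xiC_pow4 : xi ^+ 4 = 4 * (1 + 'i * s%:C) * (X%:C - 'i * s%:C * Y%:C) ^+ 4.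
Proof. by rewrite /xiC !exprMn alpha4 sqrt2C_pow4. Qed.

Lemma etaC_pow4 : eta ^+ 4 = 4 * (-1 + 'i * s%:C) * (X%:C + 'i * s%:C * Y%:C) ^+ 4.
Proof. by rewrite /etaC !exprMn beta4 sqrt2C_pow4. Qed.

Lemma xiC_pow4_sub_etaC_pow4 : xi ^+ 4 - eta ^+ 4 = (8 * P)%:C.
Proof.
rewrite xiC_pow4 etaC_pow4 quartic_identity sqr_s s_pow4; congr (_%:C).
by rewrite /Pform !(rmorphD, rmorphB, rmorphM, rmorphXn) /=; ring.
Qed.

Lemma norm_xiC_pow4 :
  `|xi ^+ 4| = (4 * Num.sqrt (1 + T) * (X ^+ 2 + T * Y ^+ 2) ^+ 2)%:C.
Proof.
rewrite xiC_pow4 normrM normrX (normrM 4) normc_1_add_i sqr_s normr_nat.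
rewrite (exprM _ 2 2) sqr_normc_sub_i sqr_s.
by rewrite rmorphM rmorphM rmorphXn rmorph_nat.
Qed.

Lemma norm_etaC_pow4 : `|eta ^+ 4| = `|xi ^+ 4|.
Proof.
rewrite norm_xiC_pow4 etaC_pow4 normrM normrX (normrM 4) normc_N1_add_i sqr_s.
rewrite normr_nat (exprM _ 2 2) sqr_normc_add_i sqr_s.
by rewrite rmorphM rmorphM rmorphXn rmorph_nat.
Qed.

Section LargeXY.
Hypotheses (t_ge1 : 1 <= t) (xy_gt : 64 * t ^+ 3 < x * y).
Hypotheses (P_gt0 : 0 < Pform t x y) (P_le : Pform t x y <= t ^+ 2).

Local Notation D := (4 * Num.sqrt (1 + T) * (X ^+ 2 + T * Y ^+ 2) ^+ 2).

Let Q_bound : 20 * T ^+ 2 <= (X ^+ 2 + T * Y ^+ 2) ^+ 2.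
Proof.
apply: quartic_form_bound; first by rewrite ler1z.
by move: xy_gt; rewrite -(ltr_int R) !(rmorphM, rmorphXn).
Qed.

Let sqrt_ge1 : 1 <= Num.sqrt (1 + T).
Proof.
have T_ge1 : 1 <= T by rewrite ler1z.
by rewrite -{1}sqrtr1 ler_sqrt; lra.
Qed.

Let D_gt0 : 0 < D.
Proof.
have T_ge1 : 1 <= T by rewrite ler1z.
have Q_gt0 : 0 < X ^+ 2 + T * Y ^+ 2.
  rewrite lt_neqAle andbC (_ : 0 <= _); last by nra.
  by apply: contraTneq Q_bound => <-; rewrite expr0n /= -ltNge; nra.
by rewrite !mulr_gt0 ?exprn_gt0 // (lt_le_trans _ sqrt_ge1).
Qed.

Lemma xiC_neq0 : xi != 0.
Proof.
have : xi ^+ 4 != 0 by rewrite -normr_eq0 norm_xiC_pow4 fmorph_eq0 lt0r_neq0 ?D_gt0.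
by apply: contraNneq => ->; rewrite expr0n.
Qed.

Lemma norm_etaC_div_xiC : `|eta / xi| = 1.
Proof.
apply/eqP; rewrite -(pexpr_eq1 (isT : 0 < 4)%N) // -normrX expr_div_n normrM.
by rewrite normfV norm_etaC_pow4 divff // normr_eq0 expf_neq0 ?xiC_neq0.
Qed.

Lemma norm_zC : `|zC t alpha beta x y| = (8 * P / D)%:C.
Proof.
have -> : zC t alpha beta x y = (xi ^+ 4 - eta ^+ 4) / xi ^+ 4.
  by rewrite /zC expr_div_n mulrBl divff // expf_neq0 // xiC_neq0.
rewrite xiC_pow4_sub_etaC_pow4 normrM normfV norm_xiC_pow4 ger0_norm ?ler0c.
  by rewrite -fmorphV -rmorphM.
by rewrite mulr_ge0 // ler0z ltW.
Qed.

Lemma norm_zC_gt0 : 0 < `|zC t alpha beta x y|.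
Proof. by rewrite norm_zC ltcR divr_gt0 // mulr_gt0 // ltr0z. Qed.

Lemma norm_zC_le : `|zC t alpha beta x y| <= (1 / 10)%:C.
Proof.
have P_leR : P <= T ^+ 2 by rewrite -rmorphXn ler_int.
rewrite norm_zC lecR ler_pdivrMr //.
have := Q_bound; have : (X ^+ 2 + T * Y ^+ 2) ^+ 2 <= Num.sqrt (1 + T) * (X ^+ 2 + T * Y ^+ 2) ^+ 2.
  by rewrite ler_peMl ?sqr_ge0.
rewrite -mulrA; lra.
Qed.

End LargeXY.
End XiEta.

Theorem lemma3p2 (R : realType) (t : int) (alpha beta : R[i]) (x y : int)
  (omega : R[i]) :
  204 < t ->
  alpha ^+ 4 = 1 + 'i * sqrtt R t ->
  beta ^+ 4 = -1 + 'i * sqrtt R t ->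
  0 < x -> 0 < y ->
  0 < Pform t x y -> Pform t x y <= t ^+ 2 ->
  64 * t ^+ 3 < x * y ->
  omega \in [:: 1; 'i; -1; - 'i] ->
  (forall k : 'I_4,
     `|omega - etaC t beta x y / xiC t alpha x y|
       <= `|'i ^+ k - etaC t beta x y / xiC t alpha x y|) ->
  `|omega - etaC t beta x y / xiC t alpha x y|
    < (pi / 12 : R)%:C * `|zC t alpha beta x y|.
Proof.
move=> t_gt alpha4 beta4 _ _ P_gt0 P_le xy_gt omega_root nearest.
have t_ge1 : 1 <= t by apply: le_trans (ltW t_gt).
have t_ge0 : 0 <= t by apply: le_trans t_ge1.
apply: nearest_root4_dist_lt => //.
- exact: norm_etaC_div_xiC.
- exact: norm_zC_gt0.
- exact: norm_zC_le.
Qed.
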